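(* Let $m\ge2$ be an integer and $k\ge0$. Then \[ \zeta^t(\{m\}_k)=\sum_{j=0}^k t^j\zeta^\star(\{m\}_j)(1-t)^{k-j}\zeta(\{m\}_{k-j}), \] and \[ \zeta^t(\{m\}_k)=\frac1{k!}B_k(x_1,\dots,x_k),\qquad x_\ell=(\ell-1)!\,\zeta(m\ell)\big(t^\ell-(t-1)^\ell\big). \]
   Context: For $\vec\ell=(\ell_1,\dots,\ell_k)$ with $\ell_1\ge\cdots\ge\ell_k\ge1$ let $\sigma(\vec\ell)=|\{1\le j\le k-1:\ell_j=\ell_{j+1}\}|$. Define $\zeta^t(\{m\}_k)=\sum_{\ell_1\ge\cdots\ge\ell_k\ge1}t^{\sigma(\vec\ell)}\prod_i\ell_i^{-m}$, $\zeta(\{m\}_k)=\sum_{\ell_1>\cdots>\ell_k\ge1}\prod_i\ell_i^{-m}$, $\zeta^\star(\{m\}_k)=\sum_{\ell_1\ge\cdots\ge\ell_k\ge1}\prod_i\ell_i^{-m}$ (all $=1$ for $k=0$), and $\zeta(s)=\sum_{j\ge1}j^{-s}$. Complete Bell polynomials: $\exp(\sum_{\ell\ge1}x_\ell z^\ell/\ell!)=\sum_{j\ge0}B_j(x_1,\dots,x_j)z^j/j!$. *)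

From Stdlib Require Import Reals List Arith.
Import ListNotations.
Open Scope R_scope.

Fixpoint wdec (k b : nat) : list (list nat) :=
  match k with
  | O => [ [] ]
  | S k' => flat_map (fun l1 => map (cons l1) (wdec k' l1)) (seq 1 b)
  end.

Fixpoint sdec (k b : nat) : list (list nat) :=
  match k with
  | O => [ [] ]
  | S k' => flat_map (fun l1 => map (cons l1) (sdec k' (l1 - 1))) (seq 1 b)
  end.

Fixpoint sigma (l : list nat) : nat :=
  match l with
  | a :: ((b :: _) as r) => ((if Nat.eqb a b then 1 else 0) + sigma r)%nat
  | _ => O
  end.

Definition prodinv (m : nat) (l : list nat) : R :=
  fold_right (fun a acc => / (INR a) ^ m * acc) 1 l.

Definition sumR (xs : list R) : R := fold_right Rplus 0 xs.

(* Partial sums (all indices <= N) of the defining series. *)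
Definition zetat_N (t : R) (m k N : nat) : R :=
  sumR (map (fun l => t ^ (sigma l) * prodinv m l) (wdec k N)).
Definition zetastar_N (m k N : nat) : R :=
  sumR (map (fun l => prodinv m l) (wdec k N)).
Definition zetaMZV_N (m k N : nat) : R :=
  sumR (map (fun l => prodinv m l) (sdec k N)).
Definition zeta1_N (s N : nat) : R :=
  sumR (map (fun j => / (INR j) ^ s) (seq 1 N)).

Definition fps := nat -> R.
Definition fps_mul (p q : fps) : fps :=
  fun n => sum_f_R0 (fun i => p i * q (n - i)%nat) n.
Fixpoint fps_pow (p : fps) (n : nat) : fps :=
  match n with
  | O => fun i => if Nat.eqb i 0 then 1 else 0
  | S n' => fps_mul p (fps_pow p n')
  end.

(* Coefficient of z^k in exp(p(z)) for p with zero constant term: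
   exp(p) = sum_n p^n/n!, and only n <= k contribute to z^k. *)
Definition fps_exp_coef (p : fps) (k : nat) : R :=
  sum_f_R0 (fun n => / INR (fact n) * fps_pow p n k) k.

(* Complete Bell polynomial: exp(sum_{l>=1} x_l z^l / l!) = sum_j B_j z^j / j!.
   B_k only depends on x_1..x_k. *)
Definition Bell (k : nat) (x : nat -> R) : R :=
  INR (fact k) *
  fps_exp_coef (fun l => if Nat.eqb l 0 then 0 else x l / INR (fact l)) k.

(* Fix the truncation [N] and let [Z_N(z) = sum_k zetat_N t m k N z^k]. Adjoining the
   index [N+1], with [x = (N+1)^-m], multiplies [Z_N] by [(1 - (t-1) x z) / (1 - t x z)],
   whose logarithmic derivative [z d/dz log] has coefficients [x^i (t^i - (t-1)^i)].
   Hence [z Z_N' = Z_N q_N] with [q_N(i) = zeta_N(m i) (t^i - (t-1)^i)]. This equation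
   determines the coefficients of [Z_N] polynomially from those of [q_N], so as
   [N -> oo] they converge to the coefficients of the solution for [q(i) = zeta(m i)
   (t^i - (t-1)^i)], namely [exp(sum_l zeta(m l) (t^l - (t-1)^l) z^l / l)]: this is the
   Bell polynomial formula. The cases [t = 1] and [t = 0] give [zeta^star] and [zeta],
   and the first identity is [Z_t(z) = Z_1(t z) Z_0((1-t) z)], which holds because
   [q_t(z) = q_1(t z) + q_0((1-t) z)]. *)

From Stdlib Require Import Reals List Arith Lia Lra FunctionalExtensionality.
From mathcomp Require all_boot all_algebra Rstruct zify ring.
Import ListNotations.
Open Scope R_scope.

Lemma sumR_app (a b : list R) : sumR (a ++ b) = sumR a + sumR b.
Proof. induction a as [|x a IH]; simpl; [ring | rewrite IH; ring]. Qed.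

Lemma sumR_map_mull {A : Type} (c : R) (f : A -> R) (L : list A) :
  sumR (map (fun l => c * f l) L) = c * sumR (map f L).
Proof. induction L as [|x L IH]; simpl; [ring | rewrite IH; ring]. Qed.

Lemma sumR_map_ext {A : Type} (f g : A -> R) (L : list A) :
  (forall x, In x L -> f x = g x) -> sumR (map f L) = sumR (map g L).
Proof.
induction L as [|x L IH]; simpl; intros H; [reflexivity|].
rewrite H, IH by auto. reflexivity.
Qed.

Lemma wdec_succ (k b : nat) :
  wdec (S k) (S b) = wdec (S k) b ++ map (cons (S b)) (wdec k (S b)).
Proof. cbn [wdec]. rewrite seq_S, flat_map_app. simpl. now rewrite app_nil_r. Qed.

Lemma sdec_succ (k b : nat) :
  sdec (S k) (S b) = sdec (S k) b ++ map (cons (S b)) (sdec k b).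
Proof.
cbn [sdec]. rewrite seq_S, flat_map_app. simpl. now rewrite app_nil_r, Nat.sub_0_r.
Qed.

Lemma in_wdec_le (k b : nat) (l : list nat) (a : nat) :
  In l (wdec k b) -> In a l -> (a <= b)%nat.
Proof.
revert b l. induction k as [|k IH]; intros b l Hl Ha.
- destruct Hl as [<-|[]]. destruct Ha.
- cbn [wdec] in Hl. apply in_flat_map in Hl. destruct Hl as [l1 [Hl1 Hl]].
  apply in_map_iff in Hl. destruct Hl as [l' [<- Hl']].
  apply in_seq in Hl1.
  destruct Ha as [<-|Ha]; [lia|].
  specialize (IH _ _ Hl' Ha). lia.
Qed.

Lemma sigma_cons_gt (c : nat) (l : list nat) :
  (forall a, In a l -> (a < c)%nat) -> sigma (c :: l) = sigma l.
Proof.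
intros H. destruct l as [|a l]; [reflexivity|].
assert (Hac : (a < c)%nat) by (apply H; left; reflexivity).
cbn [sigma]. destruct (Nat.eqb_spec c a); [lia | reflexivity].
Qed.

Definition weight (m b : nat) : R := / INR (S b) ^ m.

Definition zetat_lead_N (t : R) (m k b : nat) : R :=
  sumR (map (fun l => t ^ sigma (S b :: l) * prodinv m l) (wdec k (S b))).

Lemma zetat_N_succ (t : R) (m k b : nat) :
  zetat_N t m (S k) (S b) =
  zetat_N t m (S k) b + weight m b * zetat_lead_N t m k b.
Proof.
unfold zetat_N, zetat_lead_N. rewrite wdec_succ, map_app, sumR_app. f_equal.
rewrite map_map, <- sumR_map_mull. apply sumR_map_ext. intros l _.
unfold prodinv, weight. simpl. ring.
Qed.

Lemma zetat_lead_N_succ (t : R) (m k b : nat) :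
  zetat_lead_N t m (S k) b =
  zetat_N t m (S k) b + t * weight m b * zetat_lead_N t m k b.
Proof.
unfold zetat_N, zetat_lead_N at 1. rewrite wdec_succ, map_app, sumR_app. f_equal.
- apply sumR_map_ext. intros l Hl. rewrite sigma_cons_gt; [reflexivity|].
  intros a Ha. pose proof (in_wdec_le _ _ _ _ Hl Ha). lia.
- unfold zetat_lead_N. rewrite map_map, <- sumR_map_mull. apply sumR_map_ext.
  intros l _. cbn [sigma]. rewrite Nat.eqb_refl. unfold prodinv, weight. simpl. ring.
Qed.

Lemma zetat_lead_N_0 (t : R) (m b : nat) : zetat_lead_N t m 0 b = 1.
Proof. unfold zetat_lead_N. simpl. ring. Qed.

Lemma zetat_N_0 (t : R) (m N : nat) : zetat_N t m 0 N = 1.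
Proof. unfold zetat_N, prodinv. simpl. ring. Qed.

Lemma zetaMZV_N_succ (m k b : nat) :
  zetaMZV_N m (S k) (S b) = zetaMZV_N m (S k) b + weight m b * zetaMZV_N m k b.
Proof.
unfold zetaMZV_N. rewrite sdec_succ, map_app, sumR_app. f_equal.
rewrite map_map, <- sumR_map_mull. apply sumR_map_ext. intros l _.
unfold prodinv, weight. simpl. ring.
Qed.

Lemma zetaMZV_N_0 (m N : nat) : zetaMZV_N m 0 N = 1.
Proof. unfold zetaMZV_N, prodinv. simpl. ring. Qed.

Lemma zetastar_N_zetat_N (m k N : nat) : zetastar_N m k N = zetat_N 1 m k N.
Proof.
unfold zetastar_N, zetat_N. apply sumR_map_ext. intros l _. rewrite pow1. ring.
Qed.

Lemma zeta1_N_succ (s N : nat) : zeta1_N s (S N) = zeta1_N s N + / INR (S N) ^ s.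
Proof. unfold zeta1_N. rewrite seq_S, map_app, sumR_app. simpl. ring. Qed.

(* Comparison with the telescoping sum of [1/(j(j+1))]. *)
Lemma zeta1_N_le (s N : nat) : (2 <= s)%nat -> zeta1_N s (S N) <= 2 - / INR (S N).
Proof.
intros hs. induction N as [|N IH].
- rewrite zeta1_N_succ. simpl INR. rewrite pow1. unfold zeta1_N. simpl. lra.
- rewrite zeta1_N_succ, (S_INR (S N)).
  set (a := INR (S N)) in *. assert (ha : 1 <= a) by (apply (le_INR 1); lia).
  assert (h1 : (a + 1) ^ 2 <= (a + 1) ^ s) by (apply Rle_pow; [lra | exact hs]).
  assert (h2 : / (a + 1) ^ s <= / (a * (a + 1))).
  { apply Rinv_le_contravar; simpl in h1; nra. }
  assert (h3 : / (a * (a + 1)) = / a - / (a + 1)) by (field; lra).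
  lra.
Qed.

Lemma zeta1_N_cv (s : nat) : (2 <= s)%nat -> { z | Un_cv (fun N => zeta1_N s N) z }.
Proof.
intros hs. apply growing_cv.
- intros n. rewrite zeta1_N_succ.
  assert (0 < / INR (S n) ^ s) by (apply Rinv_0_lt_compat, pow_lt, lt_0_INR; lia).
  lra.
- exists 2. intros x [[|n] ->]; [unfold zeta1_N; simpl; lra|].
  pose proof (zeta1_N_le s n hs).
  assert (0 < / INR (S n)) by (apply Rinv_0_lt_compat, lt_0_INR; lia).
  lra.
Qed.

Lemma zeta_exists : exists zeta : nat -> R,
  forall s, (2 <= s)%nat -> Un_cv (fun N => zeta1_N s N) (zeta s).
Proof.
exists (fun s => match le_lt_dec 2 s with
                 | left hs => proj1_sig (zeta1_N_cv s hs)
                 | right _ => 0 end).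
intros s hs. destruct (le_lt_dec 2 s) as [h|h]; [exact (proj2_sig (zeta1_N_cv s h)) | lia].
Qed.

Lemma Un_cv_const (c : R) : Un_cv (fun _ => c) c.
Proof.
intros eps Heps. exists 0%nat. intros n _.
unfold R_dist. rewrite Rminus_diag, Rabs_R0. exact Heps.
Qed.

Definition bell_exponent (zeta : nat -> R) (m : nat) (t : R) (l : nat) : R :=
  if Nat.eqb l 0 then 0
  else INR (fact (l - 1)) * zeta (m * l)%nat * (t ^ l - (t - 1) ^ l) / INR (fact l).

Lemma bell_exponent_scaled (zeta : nat -> R) (m : nat) (t : R) (l : nat) :
  INR l * bell_exponent zeta m t l = zeta (m * l)%nat * (t ^ l - (t - 1) ^ l).
Proof.
destruct l as [|l]; [simpl; ring|].
unfold bell_exponent. simpl Nat.eqb. cbv iota.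
replace (S l - 1)%nat with l by lia.
change (fact (S l)) with (S l * fact l)%nat. rewrite mult_INR.
field. split; [apply INR_fact_neq_0 | apply not_0_INR; lia].
Qed.

Lemma bell_exponentE (zeta : nat -> R) (m k : nat) (t : R) :
  / INR (fact k) *
  Bell k (fun l => INR (fact (l - 1)) * zeta (m * l)%nat * (t ^ l - (t - 1) ^ l)) =
  fps_exp_coef (bell_exponent zeta m t) k.
Proof.
unfold Bell. rewrite <- Rmult_assoc, Rinv_l, Rmult_1_l by apply INR_fact_neq_0.
reflexivity.
Qed.

Section GeneratingSeries.
Import all_boot all_algebra Rstruct zify ring.
Import GRing.Theory Num.Theory.
Set Implicit Arguments. Unset Strict Implicit. Unset Printing Implicit Defensive.
Local Open Scope ring_scope.

Section Series.
Variable V : comNzRingType.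
Implicit Types p q r : nat -> V.

Definition conv p q : nat -> V := fun n => \sum_(i < n.+1) p i * q (n - i)%N.

Definition series1 : nat -> V := fun i => if i is 0%N then 1 else 0.

(* The Euler operator [z d/dz]; [D F = conv F q] says that [q] is the logarithmic
   derivative [z F'/F] of [F]. *)
Definition D p : nat -> V := fun n => n%:R * p n.

Definition dilate (c : V) p : nat -> V := fun i => c ^+ i * p i.

Lemma conv_rev p q n : conv p q n = \sum_(j < n.+1) p (n - j)%N * q j.
Proof.
rewrite /conv (reindex_inj rev_ord_inj) /=.
by apply: eq_bigr => j _; rewrite subSS subKn // -ltnS.
Qed.

Lemma convC p q : conv p q = conv q p.
Proof.
apply: functional_extensionality => n; rewrite conv_rev /conv.
by apply: eq_bigr => j _; rewrite mulrC.
Qed.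

Lemma convA p q r : conv (conv p q) r = conv p (conv q r).
Proof.
apply: functional_extensionality => i.
pose c3 j k := p j * (q (i - j - k)%N * r k).
transitivity (\sum_(k < i.+1) \sum_(j < i.+1 | (j <= i - k)%N) c3 j k).
  rewrite conv_rev; apply: eq_bigr => k _.
  rewrite /conv big_distrl /= (big_ord_narrow_leq (leq_subr _ _)).
  by apply: eq_bigr => j _; rewrite /c3 /= mulrA subnAC.
rewrite (exchange_big_dep predT) //= /conv; apply: eq_bigr => j _.
rewrite -/(conv q r (i - j)%N) conv_rev big_distrr /=.
transitivity (\sum_(k < i.+1 | (k <= i - j)%N) c3 j k).
  apply: eq_bigl => k; have := ltn_ord k; have := ltn_ord j.
  by move=> hj hk; apply/idP/idP; lia.
by rewrite (big_ord_narrow_leq (leq_subr _ _)).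
Qed.

Lemma convDr p q r : conv p (fun n => q n + r n) = fun n => conv p q n + conv p r n.
Proof.
apply: functional_extensionality => n; rewrite /conv -big_split /=.
by apply: eq_bigr => i _; rewrite mulrDr.
Qed.

Lemma convZr (c : V) p q : conv p (fun n => c * q n) = fun n => c * conv p q n.
Proof.
apply: functional_extensionality => n; rewrite /conv big_distrr /=.
by apply: eq_bigr => i _; rewrite mulrCA.
Qed.

Lemma conv1l p : conv series1 p = p.
Proof.
apply: functional_extensionality => n; rewrite /conv big_ord_recl /= mul1r subn0.
by rewrite big1 ?addr0 // => i _; rewrite mul0r.
Qed.

Lemma conv_dilate (c : V) p q : conv (dilate c p) (dilate c q) = dilate c (conv p q).
Proof.
apply: functional_extensionality => n; rewrite /conv /dilate big_distrr /=.
apply: eq_bigr => i _; have hi : (i + (n - i) = n)%N by rewrite subnKC // -ltnS.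
by rewrite mulrACA -exprD hi.
Qed.

Lemma D_conv p q : D (conv p q) = fun n => conv (D p) q n + conv p (D q) n.
Proof.
apply: functional_extensionality => n; rewrite /D /conv -big_split big_distrr /=.
apply: eq_bigr => i _; have hi : (i + (n - i) = n)%N by rewrite subnKC // -ltnS.
by rewrite -{1}hi natrD mulrDl !mulrA [p i * _]mulrC.
Qed.

Lemma D_series1 : D series1 = fun _ => 0.
Proof. by apply: functional_extensionality => -[|n]; rewrite /D /= ?mulr0 ?mul0r. Qed.

Lemma D_conv_logD F G q r : D F = conv F q -> D G = conv G r ->
  D (conv F G) = conv (conv F G) (fun i => q i + r i).
Proof.
by move=> hF hG; rewrite D_conv hF hG convDr !convA [conv q G]convC.
Qed.

Lemma D_dilate_logD (c : V) F q : D F = conv F q ->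
  D (dilate c F) = conv (dilate c F) (dilate c q).
Proof.
move=> hF; rewrite conv_dilate -hF; apply: functional_extensionality => n.
by rewrite /D /dilate mulrCA.
Qed.

Fixpoint conv_pow P (n : nat) : nat -> V :=
  if n is n'.+1 then conv P (conv_pow P n') else series1.

Lemma conv_pow_lt P n j : P 0%N = 0 -> (j < n)%N -> conv_pow P n j = 0.
Proof.
move=> P0; elim: n j => [//|n IH] j hj /=.
rewrite /conv big1 // => -[[|i] hi] _ /=; first by rewrite P0 mul0r.
by rewrite IH ?mulr0 //; lia.
Qed.

Lemma D_conv_pow P n : D (conv_pow P n.+1) = fun j => n.+1%:R * conv (D P) (conv_pow P n) j.
Proof.
elim: n => [|n IH].
  rewrite /= D_conv D_series1; apply: functional_extensionality => j.
  by rewrite mul1r [X in _ + X]/conv big1 ?addr0 // => i _; rewrite mulr0.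
rewrite [conv_pow P n.+2]/= D_conv IH convZr; apply: functional_extensionality => j.
rewrite -[conv P (conv (D P) _)]convA [conv P (D P)]convC convA /=.
by rewrite -[n.+2]addn1 natrD mulrDl mul1r addrC.
Qed.
End Series.

Section Exponential.
Variable K : numFieldType.
Implicit Types P q : nat -> K.

(* [exp P] for [P] without constant term: only [P^n] with [n <= k] contribute to [z^k]. *)
Definition exp_series P (k : nat) : K := \sum_(n < k.+1) (n`!%:R)^-1 * conv_pow P n k.

Lemma exp_series0 P : exp_series P 0 = 1.
Proof. by rewrite /exp_series big_ord_recl big_ord0 addr0 /= invr1 mul1r. Qed.

Lemma exp_series_widen P j k : P 0%N = 0 -> (j <= k)%N ->
  exp_series P j = \sum_(n < k.+1) (n`!%:R)^-1 * conv_pow P n j.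
Proof.
move=> P0 hjk; rewrite /exp_series.
rewrite (big_ord_widen k.+1 (fun n => (n`!%:R)^-1 * conv_pow P n j)) //.
rewrite big_mkcond /=; apply: eq_bigr => n _.
by case: ifP => // hn; rewrite conv_pow_lt ?mulr0 //; lia.
Qed.

Lemma D_exp_series P : P 0%N = 0 -> D (exp_series P) = conv (exp_series P) (D P).
Proof.
move=> P0; rewrite convC; apply: functional_extensionality => k.
have DP0 : D P 0%N = 0 by rewrite /D P0 mulr0.
transitivity (\sum_(n < k.+1) (n`!%:R)^-1 * conv (D P) (conv_pow P n) k).
  have top0 : conv (D P) (conv_pow P k) k = 0.
    rewrite /conv big1 // => -[[|i] hi] _ /=; first by rewrite DP0 mul0r.
    by rewrite conv_pow_lt ?mulr0 //; lia.
  rewrite big_ord_recr /= {}top0 mulr0 addr0 /D /exp_series mulr_sumr big_ord_recl /=.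
  have -> : k%:R * ((0`!)%:R^-1 * series1 K k) = 0.
    by case: k => [|k]; rewrite /series1 ?mul0r ?mulr0.
  rewrite add0r; apply: eq_bigr => n _; rewrite /= add0n mulrCA.
  have := congr1 (fun f => f k) (D_conv_pow P n); rewrite /D /= => ->.
  by rewrite factS natrM invfM -!mulrA mulrCA mulKf ?pnatr_eq0.
rewrite /conv; under eq_bigr do rewrite big_distrr; rewrite exchange_big /=.
apply: eq_bigr => i _; rewrite (exp_series_widen P0 (leq_subr i k)) big_distrr /=.
by apply: eq_bigr => n _; rewrite mulrCA.
Qed.

Lemma logD_coef F q k : q 0%N = 0 -> D F = conv F q -> (0 < k)%N ->
  F k = (k%:R)^-1 * \sum_(i < k) F i * q (k - i)%N.
Proof.
move=> q0 hF hk; have := congr1 (fun f => f k) hF.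
rewrite /D /conv big_ord_recr /= subnn q0 mulr0 addr0 => <-.
by rewrite mulKf // pnatr_eq0 -lt0n.
Qed.

Lemma logD_unique F G q : q 0%N = 0 -> F 0%N = G 0%N ->
  D F = conv F q -> D G = conv G q -> F = G.
Proof.
move=> q0 FG0 hF hG; apply: functional_extensionality => k.
elim/ltn_ind: k => -[//|k] IH.
rewrite (logD_coef q0 hF) // (logD_coef q0 hG) //; congr (_ * _).
by apply: eq_bigr => i _; rewrite IH.
Qed.
End Exponential.

Lemma sum_f_R0_big (f : nat -> R) n : sum_f_R0 f n = \sum_(i < n.+1) f i.
Proof.
elim: n => [|n IH]; first by rewrite big_ord_recl big_ord0 addr0.
by rewrite big_ord_recr /= -IH.
Qed.

Lemma fps_exp_coefE (P : nat -> R) k : fps_exp_coef P k = exp_series P k.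
Proof.
have fpsE n i : fps_pow P n i = conv_pow P n i.
  elim: n i => [|n IH] i; first by case: i.
  rewrite /= /fps_mul sum_f_R0_big /conv.
  by apply: eq_bigr => j _; rewrite IH.
have factE n : fact n = n`! by elim: n => [//|n IH]; rewrite factS -IH.
rewrite /fps_exp_coef sum_f_R0_big; apply: eq_bigr => n _.
by rewrite fpsE INRE factE RinvE RmultE.
Qed.

Section TruncatedSeries.
Implicit Types (t x : R) (m N : nat).

Definition zetat_series t m N : nat -> R := fun k => zetat_N t m k N.
Definition zetaMZV_series m N : nat -> R := fun k => zetaMZV_N m k N.

(* [(1 - (t - 1) x z) / (1 - t x z)] *)
Definition step_series t x : nat -> R :=
  fun i => if i is i'.+1 then t ^+ i' * x ^+ i else 1.
Definition step_logD t x : nat -> R := fun i => x ^+ i * (t ^+ i - (t - 1) ^+ i).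
Definition power_sum_logD t m N : nat -> R :=
  fun i => zeta1_N (m * i) N * (t ^+ i - (t - 1) ^+ i).

Lemma zetat_series0 t m : zetat_series t m 0 = series1 R.
Proof.
by apply: functional_extensionality => -[|k]; rewrite /zetat_series ?zetat_N_0.
Qed.

Lemma zetat_lead_N_big t m k N :
  zetat_lead_N t m k N = \sum_(c < k.+1) (t * weight m N) ^+ c * zetat_N t m (k - c) N.
Proof.
elim: k => [|k IH]; first by rewrite zetat_lead_N_0 big_ord1 zetat_N_0 mulr1.
rewrite zetat_lead_N_succ IH [in RHS]big_ord_recl subn0 mul1r RplusE !RmultE; congr (_ + _).
rewrite big_distrr /=; apply: eq_bigr => c _.
by rewrite /bump leq0n add1n subSS exprS mulrA.
Qed.

Lemma zetat_series_succ t m N :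
  zetat_series t m N.+1 = conv (step_series t (weight m N)) (zetat_series t m N).
Proof.
apply: functional_extensionality => -[|k].
  by rewrite /zetat_series /conv big_ord1 !zetat_N_0 mul1r.
rewrite /zetat_series /conv zetat_N_succ zetat_lead_N_big [in RHS]big_ord_recl subn0 mul1r.
rewrite RplusE RmultE; congr (_ + _).
rewrite big_distrr /=; apply: eq_bigr => c _.
by rewrite /bump leq0n add1n subSS exprMn exprS !mulrA [_ * t ^+ c]mulrC.
Qed.

Lemma D_step_series t x : D (step_series t x) = conv (step_series t x) (step_logD t x).
Proof.
rewrite convC; apply: functional_extensionality => -[|n].
  by rewrite /D /conv big_ord1 /step_logD /=; ring.
rewrite /D /conv big_ord_recr /= subnn mulr1.
rewrite (eq_bigr (fun i : 'I_n.+1 =>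
  x ^+ n.+1 * (t ^+ n - t ^+ (n - i) * (t - 1) ^+ i))); last first.
  move=> i _ /=; have hi : (i <= n)%N by rewrite -ltnS.
  rewrite subSn // /step_logD /step_series.
  have -> : x ^+ n.+1 = x ^+ i * x ^+ (n - i).+1 by rewrite -exprD addnS subnKC.
  have -> : t ^+ n = t ^+ i * t ^+ (n - i) by rewrite -exprD subnKC.
  ring.
rewrite -big_distrr /= big_split /= sumr_const card_ord sumrN.
have := subrXX t (t - 1) n.+1; rewrite /= (_ : t - (t - 1) = 1); last by ring.
by rewrite mul1r => <-; rewrite /step_logD -mulr_natl; ring.
Qed.

Lemma weight_expr m N i : / INR N.+1 ^ (m * i) = weight m N ^+ i.
Proof. by rewrite /weight pow_mult -pow_inv RpowE. Qed.

Lemma D_zetat_series t m N :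
  D (zetat_series t m N) = conv (zetat_series t m N) (power_sum_logD t m N).
Proof.
elim: N => [|N IH].
  rewrite zetat_series0 D_series1 conv1l; apply: functional_extensionality => i.
  by rewrite /power_sum_logD mul0r.
rewrite zetat_series_succ convC (D_conv_logD IH (D_step_series _ _)).
congr conv; apply: functional_extensionality => i.
by rewrite /power_sum_logD /step_logD zeta1_N_succ weight_expr RplusE mulrDl.
Qed.

Lemma zetaMZV_series_succ m N :
  zetaMZV_series m N.+1 = conv (step_series 0 (weight m N)) (zetaMZV_series m N).
Proof.
apply: functional_extensionality => -[|k].
  by rewrite /zetaMZV_series /conv big_ord1 !zetaMZV_N_0 mul1r.
rewrite /zetaMZV_series /conv zetaMZV_N_succ !big_ord_recl big1; last first.
  by move=> i _; rewrite /= expr0n mul0r mul0r.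
by rewrite /= subn0 subSS subn0 mul1r expr0 mul1r expr1 addr0 RplusE RmultE.
Qed.

Lemma zetat_series_at0 m N : zetat_series 0 m N = zetaMZV_series m N.
Proof.
elim: N => [|N IH].
  by apply: functional_extensionality => -[|k]; rewrite /zetat_series /zetaMZV_series
    ?zetat_N_0 ?zetaMZV_N_0.
by rewrite zetat_series_succ zetaMZV_series_succ IH.
Qed.
End TruncatedSeries.

(* [CV_mult] for the ring operations of [R], which are only convertible to [Rmult]. *)
Lemma Un_cv_mul (u v : nat -> R) a b :
  Un_cv u a -> Un_cv v b -> Un_cv (fun n => u n * v n) (a * b).
Proof. exact: CV_mult. Qed.

Lemma Un_cv_big_sum (u : nat -> nat -> R) (l : nat -> R) n :
  (forall i, (i < n)%N -> Un_cv (u i) (l i)) ->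
  Un_cv (fun N => \sum_(i < n) u i N) (\sum_(i < n) l i).
Proof.
elim: n => [|n IH] hu.
  under [fun N => _]functional_extensionality => N do rewrite big_ord0.
  by rewrite big_ord0; apply: Un_cv_const.
under [fun N => _]functional_extensionality => N do rewrite big_ord_recr.
rewrite big_ord_recr; apply: CV_plus; last exact: hu.
by apply: IH => i hi; apply: hu; rewrite ltnW.
Qed.

(* By [logD_coef], the coefficients of a solution of [D F = conv F q] are polynomials
   in those of [q], hence continuous in [q]. *)
Lemma Un_cv_logD (F q : nat -> nat -> R) (E e : nat -> R) :
  (forall N, F N 0%N = E 0%N) -> (forall N, q N 0%N = 0) -> e 0%N = 0 ->
  (forall N, D (F N) = conv (F N) (q N)) -> D E = conv E e ->
  (forall i, (0 < i)%N -> Un_cv (fun N => q N i) (e i)) ->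
  forall k, Un_cv (fun N => F N k) (E k).
Proof.
move=> F0 q0 e0 hF hE hq; elim/ltn_ind => -[_|k IH].
  by under [fun N => _]functional_extensionality => N do rewrite F0; apply: Un_cv_const.
under [fun N => _]functional_extensionality => N do rewrite (logD_coef (q0 N) (hF N)) //.
rewrite (logD_coef e0 hE) //; apply: Un_cv_mul; first exact: Un_cv_const.
apply: (@Un_cv_big_sum (fun i N => F N i * q N (k.+1 - i)%N)
                       (fun i => E i * e (k.+1 - i)%N)) => i hi.
apply: Un_cv_mul; first exact: IH.
by apply: hq; rewrite subn_gt0.
Qed.

Section Limits.
Variable zeta : nat -> R.
Hypothesis zeta_cv : forall s, (2 <= s)%coq_nat -> Un_cv (fun N => zeta1_N s N) (zeta s).
Variable m : nat.
Hypothesis m_ge2 : (2 <= m)%coq_nat.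

Definition zeta_logD t : nat -> R := fun i => zeta (m * i) * (t ^+ i - (t - 1) ^+ i).

Lemma D_bell_exponent t : D (bell_exponent zeta m t) = zeta_logD t.
Proof.
apply: functional_extensionality => i.
rewrite /D /zeta_logD -INRE -!RpowE; exact: bell_exponent_scaled.
Qed.

Lemma Un_cv_power_sum_logD t i : (0 < i)%N ->
  Un_cv (fun N => power_sum_logD t m N i) (zeta_logD t i).
Proof.
move=> hi; apply: Un_cv_mul; last exact: Un_cv_const.
by apply: zeta_cv; apply/leP; move/leP: m_ge2; nia.
Qed.

Lemma Un_cv_zetat_N t k :
  Un_cv (fun N => zetat_N t m k N) (fps_exp_coef (bell_exponent zeta m t) k).
Proof.
rewrite fps_exp_coefE.
apply: (@Un_cv_logD (zetat_series t m) (power_sum_logD t m) _ (zeta_logD t)) => [N|N||N||].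
- by rewrite /zetat_series zetat_N_0 exp_series0.
- by rewrite /power_sum_logD !expr0 subrr mulr0.
- by rewrite /zeta_logD !expr0 subrr mulr0.
- exact: D_zetat_series.
- by rewrite D_exp_series ?D_bell_exponent //=.
- exact: Un_cv_power_sum_logD.
Qed.

Lemma Un_cv_zetastar_N j :
  Un_cv (fun N => zetastar_N m j N) (fps_exp_coef (bell_exponent zeta m 1) j).
Proof.
under [fun N => _]functional_extensionality => N do rewrite zetastar_N_zetat_N.
exact: Un_cv_zetat_N.
Qed.

Lemma Un_cv_zetaMZV_N j :
  Un_cv (fun N => zetaMZV_N m j N) (fps_exp_coef (bell_exponent zeta m 0) j).
Proof.
under [fun N => _]functional_extensionality => N do
  rewrite -[zetaMZV_N m j N]/(zetaMZV_series m N j) -zetat_series_at0.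
exact: Un_cv_zetat_N.
Qed.

(* [t^i - (t-1)^i = t^i (1 - 0^i) + (1-t)^i (0^i - (-1)^i)] *)
Lemma zeta_logD_dilate t :
  zeta_logD t = fun i => dilate t (zeta_logD 1) i + dilate (1 - t) (zeta_logD 0) i.
Proof.
apply: functional_extensionality => -[|i]; rewrite /dilate /zeta_logD.
  by rewrite !expr0 !subrr !mulr0 addr0.
have -> : t - 1 = -1 * (1 - t) by ring.
rewrite subrr expr0n expr1n !sub0r exprMn subr0 mulr1.
ring.
Qed.

Lemma exp_series_bell_exponent_dilate t :
  exp_series (bell_exponent zeta m t) =
  conv (dilate t (exp_series (bell_exponent zeta m 1)))
       (dilate (1 - t) (exp_series (bell_exponent zeta m 0))).
Proof.
have hD u : D (exp_series (bell_exponent zeta m u)) =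
    conv (exp_series (bell_exponent zeta m u)) (zeta_logD u).
  by rewrite D_exp_series ?D_bell_exponent //=.
apply: (@logD_unique _ _ _ (zeta_logD t)).
- by rewrite /zeta_logD !expr0 subrr mulr0.
- by rewrite /conv big_ord1 /dilate !exp_series0 !expr0 !mulr1.
- exact: hD.
- by rewrite zeta_logD_dilate; apply: D_conv_logD; apply: D_dilate_logD.
Qed.

Local Open Scope R_scope.
Lemma fps_exp_coef_bell_exponent_sum t k :
  fps_exp_coef (bell_exponent zeta m t) k =
  sum_f_R0 (fun j => t ^ j * fps_exp_coef (bell_exponent zeta m 1) j *
    (1 - t) ^ (k - j) * fps_exp_coef (bell_exponent zeta m 0) (k - j)) k.
Proof.
rewrite sum_f_R0_big !fps_exp_coefE exp_series_bell_exponent_dilate /conv.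
by apply: eq_bigr => j _; rewrite !fps_exp_coefE /dilate !RpowE !RmultE !mulrA.
Qed.
End Limits.
End GeneratingSeries.

Theorem mainTheorem11 (m k : nat) (t : R) (hm : (2 <= m)%nat) :
  exists (Zt : R) (Zstar Zmzv zeta : nat -> R),
    Un_cv (fun N => zetat_N t m k N) Zt /\
    (forall j, Un_cv (fun N => zetastar_N m j N) (Zstar j)) /\
    (forall j, Un_cv (fun N => zetaMZV_N m j N) (Zmzv j)) /\
    (forall s, (2 <= s)%nat -> Un_cv (fun N => zeta1_N s N) (zeta s)) /\
    Zt = sum_f_R0 (fun j => t ^ j * Zstar j * (1 - t) ^ (k - j) * Zmzv (k - j)%nat) k /\
    Zt = / INR (fact k) *
         Bell k (fun l => INR (fact (l - 1)) * zeta (m * l)%nat * (t ^ l - (t - 1) ^ l)).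
Proof.
destruct zeta_exists as [zeta hz].
exists (fps_exp_coef (bell_exponent zeta m t) k),
  (fps_exp_coef (bell_exponent zeta m 1)), (fps_exp_coef (bell_exponent zeta m 0)), zeta.
split; [exact (Un_cv_zetat_N hz hm t k)|].
split; [exact (Un_cv_zetastar_N hz hm)|].
split; [exact (Un_cv_zetaMZV_N hz hm)|].
split; [exact hz|].
split; [exact (fps_exp_coef_bell_exponent_sum zeta m t k)|].
symmetry. exact (bell_exponentE zeta m k t).
Qed.
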